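(* Let $k\ge1$ and $m\ge1$ be integers. Consider all $k$-Dyck paths with exactly $m+1$ up-steps. For each such path, let $r(P)$ be the number of down-steps in the maximal run of down-steps immediately following its first up-step (so $0\le r(P)\le k$). Then $$\sum_{P} r(P)=\frac{k}{m+1}\binom{(k+1)m}{m}.$$
   Context: A $k$-Dyck path is a lattice path from $(0,0)$ to a point on the $x$-axis using up-steps $(1,k)$ and down-steps $(1,-1)$ that never goes below the $x$-axis. *)

From mathcomp Require Import all_boot all_order all_algebra.
Set Implicit Arguments. Unset Strict Implicit. Unset Printing Implicit Defensive.

(* A step sequence: true = up-step (1,k), false = down-step (1,-1).
   Height after the prefix take i s is k * #ups - #downs. *)

Definition is_kDyck (k : nat) (s : seq bool) : bool :=
  [forall i : 'I_(size s).+1,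
     count negb (take i s) <= k * count id (take i s)]
  && (count negb s == k * count id s).

Definition first_down_run (s : seq bool) : nat :=
  find id (drop (index true s).+1 s).

From mathcomp Require Import all_boot all_order all_algebra.
From mathcomp Require Import zify.

(* A k-Dyck path with m+1 up-steps starts with an up-step to height k, and
   r(P) >= k - j exactly when the next k - j steps go down, leaving a k-path
   from height j with m up-steps.  Hence the sum of r(P) is the number of
   k-paths from heights j < k with m up-steps.  There are C(n,u) - k C(n,u-1)
   k-paths from height h with u up-steps, where n = (k+1)u + h is their length
   (a ballot-type count); the hockey-stick identity telescopes the sum over j
   to k C(A,m) - C(A,m+1) with A = (k+1)m, and (m+1) C(A,m+1) = k m C(A,m)
   yields the stated value. *)

Fixpoint kpath_from (k h : nat) (s : seq bool) : bool :=
  if s is b :: s' then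
    if b then kpath_from k (h + k) s' else (0 < h) && kpath_from k h.-1 s'
  else h == 0.

Lemma kpath_fromP k h s :
  kpath_from k h s <->
  (forall i, count negb (take i s) <= h + k * count id (take i s))
  /\ count negb s = h + k * count id s.
Proof.
elim: s h => [|b s IH] h /=.
  by rewrite muln0 addn0; split=> [/eqP -> | [_ <-]].
case: b => /=.
  split=> [/IH[Hi He] | [Hi He]].
    by split=> [[|i] /= | ]; [| have := Hi i | ]; lia.
  by apply/IH; split=> [i | ]; [have := Hi i.+1 | ]; rewrite /=; lia.
case: h => [|h]; first by split=> // -[/(_ 1)]; rewrite /= take0 /= muln0.
split=> [/IH[Hi He] | [Hi He]].
  by split=> [[|i] /= | ]; [| have := Hi i | ]; lia.
by apply/IH; split=> [i | ]; [have := Hi i.+1 | ]; rewrite /=; lia.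
Qed.

Lemma is_kDyckE k s : is_kDyck k s = kpath_from k 0 s.
Proof.
apply/idP/idP => [/andP[/forallP Hi /eqP He] | /kpath_fromP[Hi He]].
  apply/kpath_fromP; split=> // i.
  have [lt_i | le_i] := ltnP i (size s).+1; first exact: Hi (Ordinal lt_i).
  by rewrite take_oversize ?He // ltnW.
by apply/andP; split; [apply/forallP => i; exact: Hi | rewrite He].
Qed.

Lemma big_tuple_cons {R : Type} {idx : R} {op : Monoid.com_law idx}
    {T : finType} {n : nat} (P : pred (seq T)) (F : seq T -> R) :
  \big[op/idx]_(t : n.+1.-tuple T | P t) F t =
  \big[op/idx]_(x : T) \big[op/idx]_(t : n.-tuple T | P (x :: t)) F (x :: t).
Proof.
rewrite pair_big_dep /=.
rewrite (reindex (fun t : n.+1.-tuple T => (thead t, behead_tuple t))) /=.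
  by apply: eq_big => t; case/tupleP: t.
exists (fun p => cons_tuple p.1 p.2) => [t _ | [x t] _].
  by apply: val_inj; case/tupleP: t.
by congr pair; apply: val_inj.
Qed.

Definition nb_kpaths k n h u :=
  \sum_(t : n.-tuple bool | kpath_from k h t && (count id t == u)) 1.

Definition sum_lead_downs k n h u :=
  \sum_(t : n.-tuple bool | kpath_from k h t && (count id t == u)) find id t.

Lemma nb_kpathsS k n h u :
  nb_kpaths k n.+1 h u =
  (if u is u'.+1 then nb_kpaths k n (h + k) u' else 0)
  + (if h is h'.+1 then nb_kpaths k n h' u else 0).
Proof.
rewrite /nb_kpaths
  (big_tuple_cons (fun s => kpath_from k h s && (count id s == u)) (fun=> 1)).
rewrite big_bool /=; congr (_ + _).
  by case: u => [|u]; [apply: big_pred0 => t; rewrite andbF | ].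
by case: h => [|h]; first exact: big_pred0.
Qed.

Lemma sum_lead_downsS k n h u :
  sum_lead_downs k n.+1 h u =
  if h is h'.+1 then sum_lead_downs k n h' u + nb_kpaths k n h' u else 0.
Proof.
rewrite /sum_lead_downs
  (big_tuple_cons (fun s => kpath_from k h s && (count id s == u)) (find id)).
rewrite big_bool /= big1 // add0n.
case: h => [|h]; first exact: big_pred0.
by rewrite -big_split; apply: eq_bigr => t _; rewrite /= addn1.
Qed.

Lemma sum_lead_downs0 k n u : sum_lead_downs k n 0 u = 0.
Proof.
case: n => [|n]; last by rewrite sum_lead_downsS.
by rewrite /sum_lead_downs big1 // => t _; rewrite tuple0.
Qed.

Lemma sum_lead_downsE k n h u :
  sum_lead_downs k (n + h) h u = \sum_(j < h) nb_kpaths k (n + j) j u.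
Proof.
elim: h => [|h IH]; first by rewrite big_ord0 sum_lead_downs0.
by rewrite addnS sum_lead_downsS IH big_ord_recr.
Qed.

Lemma bin_kfold k u : 'C(k.+1 * u + k, u.+1) = k * 'C(k.+1 * u + k, u).
Proof.
apply/eqP; rewrite -(eqn_pmul2l (ltn0Sn u)) mul_bin_left mulnA.
by rewrite (_ : k.+1 * u + k - u = u.+1 * k) //; lia.
Qed.

Lemma binS_pred n u : 'C(n.+1, u) = 'C(n, u) + 'C(n, u.-1) * (0 < u).
Proof. by case: u => [|u]; rewrite ?bin0 ?muln0 ?addn0 // binS muln1. Qed.

Lemma nb_kpaths_ballot k u h :
  nb_kpaths k (k.+1 * u + h) h u + k * 'C(k.+1 * u + h, u.-1) * (0 < u)
  = 'C(k.+1 * u + h, u).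
Proof.
(* Both sides obey Pascal's rule [nb_kpathsS]; at height 0 the up-step lands
   at height k, where [bin_kfold] matches the boundary value. *)
elim: u h => [|u IHu] h.
  rewrite muln0 add0n bin0 muln0 addn0.
  elim: h => [|h IHh]; last by rewrite nb_kpathsS.
  by rewrite /nb_kpaths (big_pred1 [tuple]) // => t; rewrite tuple0.
elim: h => [|h IHh].
  rewrite addn0 (_ : k.+1 * u.+1 = (k.+1 * u + k).+1); last first.
    by rewrite mulnS; lia.
  rewrite nb_kpathsS addn0 add0n binS bin_kfold binS_pred /= muln1 mulnDr mulnA.
  have := IHu k; lia.
rewrite [_ + h.+1]addnS nb_kpathsS binS binS_pred /= muln1 mulnDr mulnA.
have := IHu (h.+1 + k).
rewrite (_ : k.+1 * u + (h.+1 + k) = k.+1 * u.+1 + h); last first.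
  by rewrite mulnS; lia.
by move: IHh => /=; rewrite muln1; lia.
Qed.

Lemma sum_bin_shift n m i :
  \sum_(j < i) 'C(n + j, m) + 'C(n, m.+1) = 'C(n + i, m.+1).
Proof.
elim: i => [|i IH]; first by rewrite big_ord0 addn0.
by rewrite big_ord_recr addnS binS -IH /= addnAC.
Qed.

Lemma sum_first_down_run k m :
  \sum_(P : (k.+1 * m.+1).-tuple bool | is_kDyck k P && (count id P == m.+1))
    first_down_run P
  = sum_lead_downs k (k.+1 * m + k) k m.
Proof.
rewrite (_ : k.+1 * m.+1 = (k.+1 * m + k).+1); last by rewrite mulnS; lia.
rewrite (big_tuple_cons (fun s => is_kDyck k s && (count id s == m.+1))
                        first_down_run).
rewrite big_bool /= [X in _ + X]big_pred0 ?addn0 => [|t]; last first.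
  by rewrite is_kDyckE.
by apply: eq_big => t; rewrite ?is_kDyckE /= ?add0n // /first_down_run /= drop0.
Qed.

Lemma sum_nb_kpaths k m : 0 < m ->
  \sum_(j < k) nb_kpaths k (k.+1 * m + j) j m + 'C(k.+1 * m, m.+1)
  = k * 'C(k.+1 * m, m).
Proof.
case: m => [//|m] _; set A := k.+1 * m.+1.
have ballot : \sum_(j < k) nb_kpaths k (A + j) j m.+1
              + k * \sum_(j < k) 'C(A + j, m) = \sum_(j < k) 'C(A + j, m.+1).
  rewrite big_distrr -big_split; apply: eq_bigr => j _ /=.
  by rewrite -(nb_kpaths_ballot k m.+1 j) /= muln1.
have hockey := sum_bin_shift A m.+1 k.
rewrite bin_kfold -/A -sum_bin_shift mulnDr in hockey.
lia.
Qed.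

Import GRing.Theory Num.Theory.
Local Open Scope ring_scope.

Theorem mainTheorem6 (k m : nat) (hk : (1 <= k)%N) (hm : (1 <= m)%N) :
  ((\sum_(P : ((k.+1) * (m.+1)).-tuple bool
          | is_kDyck k P && (count id P == m.+1)%N)
      first_down_run P)%N)%:R
  = (k%:R / (m.+1)%:R) * ('C((k.+1) * m, m))%:R :> rat.
Proof.
rewrite sum_first_down_run sum_lead_downsE.
set S := (\sum_(j < k) _)%N; set C := 'C(_, m).
have S_mul : (S * m.+1 = k * C)%N.
  have := sum_nb_kpaths k m hm; have := mul_bin_left (k.+1 * m) m.
  rewrite (_ : k.+1 * m - m = k * m)%N; last by lia.
  nia.
rewrite mulrAC; apply: (canRL (mulfK _)); first by rewrite pnatr_eq0.
by rewrite -!natrM S_mul.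
Qed.
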